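(* With the notation of the context, for every $\Gamma>0$ and all fixed frequencies, $$|B_\Gamma\cap S|\lesssim N_{\min}N_{\rm med};\qquad |B_\Gamma\cap S_k|,\ |B_\Gamma\cap S_{k_i}|\lesssim N_{\rm med}\ (i=1,2,3);\qquad |B_\Gamma\cap S_{kk_2}|,\ |B_\Gamma\cap S_{k_1k_3}|\lesssim N_{\rm med}.$$
   Context: Fix $\alpha\in(1,2)$, dyadic numbers $1\le N_1,N_2,N_3\le N$, a real number $m$ and a constant $C_0>0$. Let $S$ be the set of $(k,k_1,k_2,k_3)\in\mathbb Z^4$ with $k=k_1-k_2+k_3$, $k_2\notin\{k_1,k_3\}$, $\big||k_1|^\alpha-|k_2|^\alpha+|k_3|^\alpha-|k|^\alpha-m\big|\le C_0$, $|k|\le N$ and $|k_j|\le N_j$ for $j=1,2,3$. When some variables are fixed, $S$ with those variables as subscripts denotes the set of remaining variables for which the quadruple lies in $S$ (e.g. $S_{kk_2}=\{(k_1,k_3):(k,k_1,k_2,k_3)\in S\}$); intersections $B_\Gamma\cap S_{\cdots}$ are understood in the same sliced sense. $N_{\max}\ge N_{\rm med}\ge N_{\min}$ denote the decreasing rearrangement of $N_1,N_2,N_3$; fix an index $j_*$ with $N_{j_*}=N_{\max}$ and write $k_{\max}=k_{j_*}$. For $\Gamma>0$, $B_\Gamma=\{(k,k_1,k_2,k_3)\in S:|k_{\max}|\le\Gamma<|k|\}$. $|A|$ is cardinality. $A\lesssim B$ means $A\le CB$ with $C$ depending only on $\alpha$ and $C_0$. *)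

From Stdlib Require Export Reals ZArith List.
Export ListNotations.
Open Scope R_scope.

(* |x|^alpha with the convention 0^alpha = 0 (alpha > 0). *)
Definition apow (alpha x : R) : R :=
  if Req_EM_T x 0 then 0 else Rpower (Rabs x) alpha.

(* |A| <= b : every duplicate-free finite list of elements of A has length <= b. *)
Definition card_le {T : Type} (A : T -> Prop) (b : R) : Prop :=
  forall l : list T, NoDup l -> (forall x, In x l -> A x) -> INR (length l) <= b.

Definition dyadic (n : Z) : Prop := exists j : nat, n = (2 ^ Z.of_nat j)%Z.

Definition Nmax3 (a b c : Z) : Z := Z.max (Z.max a b) c.
Definition Nmin3 (a b c : Z) : Z := Z.min (Z.min a b) c.
Definition Nmed3 (a b c : Z) : Z := (a + b + c - Nmax3 a b c - Nmin3 a b c)%Z.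

Definition sel3 {T : Type} (j : nat) (a b c : T) : T :=
  match j with 1%nat => a | 2%nat => b | _ => c end.

Definition inS (alpha C0 m : R) (N N1 N2 N3 : Z) (k k1 k2 k3 : Z) : Prop :=
  k = (k1 - k2 + k3)%Z /\ k2 <> k1 /\ k2 <> k3 /\
  Rabs (apow alpha (IZR k1) - apow alpha (IZR k2) + apow alpha (IZR k3)
        - apow alpha (IZR k) - m) <= C0 /\
  (Z.abs k <= N)%Z /\ (Z.abs k1 <= N1)%Z /\ (Z.abs k2 <= N2)%Z /\ (Z.abs k3 <= N3)%Z.

(* membership in B_Gamma, with k_max = k_{jstar} *)
Definition inB (alpha C0 m : R) (N N1 N2 N3 : Z) (jstar : nat) (Gamma : R)
  (k k1 k2 k3 : Z) : Prop :=
  inS alpha C0 m N N1 N2 N3 k k1 k2 k3 /\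
  IZR (Z.abs (sel3 jstar k1 k2 k3)) <= Gamma /\ Gamma < IZR (Z.abs k).

(* Write phi t = |t|^al.  On [-r, r] the second differences of phi are at least
   mu al r = kappa al * r^(al-2), so for a fixed step v <> 0 the increment
   t |-> phi (t + v) - phi t grows by at least mu al r * |v| per unit of t, and at most
   1 + 4 C0 / (mu al r * |v|) values of t put it in a window of width 2 C0.
   Once one frequency is fixed, a resonant quadruple is determined by the step
   v = k3 - k2 = k - k1 (or v = k1 - k2 = k - k3) and a base point of the pair not
   containing the fixed frequency, and resonance puts the increment of that pair in a
   window depending on v only.  The pair can be chosen to contain a frequency of size
   <= Nmed.  Either its other member is O(Nmed) too, and summing
   1 + C0 Nmed^(2-al) / |v| over |v| = O(Nmed) gives O(Nmed); or it lies within
   2 Nmed of Gamma >> Nmed, so v ranges over an annulus of width O(Nmed) around Gamma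
   on which every term is O(1).  The full count fibres over the frequency bounded by
   Nmin, and in the two-frequency slices one frequency of size <= Nmed or within
   2 Nmed of Gamma determines the quadruple. *)

From Stdlib Require Import Reals ZArith List Lra Lia.
Open Scope R_scope.

Lemma Rdiv_nonneg a b : 0 <= a -> 0 < b -> 0 <= a / b.
Proof. intros. unfold Rdiv. apply Rmult_le_pos; [lra | left; apply Rinv_0_lt_compat; lra]. Qed.

Lemma Rle_div_of_mul d a b : 0 < d -> d * a <= b -> a <= b / d.
Proof.
  intros Hd H. apply (Rmult_le_reg_l d); [auto|].
  replace (d * (b / d)) with b by (field; lra). auto.
Qed.

Lemma Rdiv_le_den a x y : 0 <= a -> 0 < y <= x -> a / x <= a / y.
Proof.
  intros. unfold Rdiv. apply Rmult_le_compat_l; [lra|]. apply Rinv_le_contravar; lra.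
Qed.

Lemma Rabs_le_bounds x a : Rabs x <= a -> - a <= x <= a.
Proof. unfold Rabs. destruct (Rcase_abs x); lra. Qed.

Lemma Rpower_pos x y : 0 < Rpower x y.
Proof. apply exp_pos. Qed.

Lemma Rpower_1_base y : Rpower 1 y = 1.
Proof. unfold Rpower; rewrite ln_1, Rmult_0_r; apply exp_0. Qed.

Lemma Rpower_plus_1 x p : 0 < x -> Rpower x (p + 1) = Rpower x p * x.
Proof. intros Hx. rewrite Rpower_plus, Rpower_1; auto. Qed.

Lemma Rpower_le_nonpos a b p : 0 < a <= b -> p <= 0 -> Rpower b p <= Rpower a p.
Proof.
  intros Hab Hp.
  replace p with (- - p) by ring. rewrite !(Rpower_Ropp _ (- p)).
  apply Rinv_le_contravar; [apply Rpower_pos|]. apply Rle_Rpower_l; lra.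
Qed.

Lemma Rpower_ge_1 x p : 1 <= x -> 0 <= p -> 1 <= Rpower x p.
Proof. intros. rewrite <- (Rpower_1_base p). apply Rle_Rpower_l; lra. Qed.

Lemma Rpower_le_1 x p : 1 <= x -> p <= 0 -> Rpower x p <= 1.
Proof. intros. rewrite <- (Rpower_1_base p). apply Rpower_le_nonpos; lra. Qed.

(* Mean value theorem: the derivative y t^(y-1) is at least y r^(y-1) on [a, r]. *)
Lemma Rpower_increment_ge y a b r :
  0 < a -> a <= b -> b <= r -> 0 <= y <= 1 ->
  y * Rpower r (y - 1) * (b - a) <= Rpower b y - Rpower a y.
Proof.
  intros Ha Hab Hbr Hy.
  destruct (Req_dec a b) as [<-|Hne]; [nra|].
  destruct (MVT_cor2 (fun x => Rpower x y) (fun x => y * Rpower x (y - 1)) a b)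
    as [c [-> Hc]]; [lra| intros c Hc; apply derivable_pt_lim_power; lra |].
  assert (Rpower r (y - 1) <= Rpower c (y - 1)) by (apply Rpower_le_nonpos; lra).
  apply Rmult_le_compat_r; [lra|]. apply Rmult_le_compat_l; lra.
Qed.

Lemma Rpower_second_difference al r s :
  1 < al < 2 -> 1 <= s -> s + 2 <= r ->
  al * (al - 1) * Rpower r (al - 2) <= Rpower (s + 2) al - 2 * Rpower (s + 1) al + Rpower s al.
Proof.
  intros Hal Hs Hr.
  set (c := al * (al - 1) * Rpower r (al - 2)).
  set (g := fun t => Rpower t al - c / 2 * (t * t)).
  set (g' := fun t => al * Rpower t (al - 1) - c * t).
  (* g t = t^al - c t^2 / 2 has a nondecreasing derivative on [1, r], hence
     nonnegative second differences. *)
  assert (g'_mono : forall a b, 1 <= a -> a <= b -> b <= r -> g' a <= g' b).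
  { intros a b Ha Hab Hb. unfold g', c.
    pose proof (Rpower_increment_ge (al - 1) a b r ltac:(lra) Hab Hb ltac:(lra)) as H.
    replace (al - 1 - 1) with (al - 2) in H by ring. nra. }
  assert (g_deriv : forall t, 0 < t -> derivable_pt_lim g t (g' t)).
  { intros t Ht. unfold g, g'.
    replace (al * Rpower t (al - 1) - c * t) with
      (al * Rpower t (al - 1) - (0 * (t * t) + c / 2 * (1 * t + t * 1))) by field.
    apply (derivable_pt_lim_minus _ (fun t => c / 2 * (t * t)));
      [apply derivable_pt_lim_power; lra|].
    apply (derivable_pt_lim_mult (fun _ => c / 2) (fun t => t * t));
      [apply derivable_pt_lim_const|].
    apply (derivable_pt_lim_mult (fun t => t) (fun t => t)); apply derivable_pt_lim_id. }
  destruct (MVT_cor2 g g' s (s + 1)) as [c1 [E1 H1]]; [lra| intros; apply g_deriv; lra|].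
  destruct (MVT_cor2 g g' (s + 1) (s + 2)) as [c2 [E2 H2]]; [lra| intros; apply g_deriv; lra|].
  assert (g' c1 <= g' c2) by (apply g'_mono; lra).
  unfold g in E1, E2. fold c. nra.
Qed.

Definition apowZ (al : R) (t : Z) : R := apow al (IZR t).

Lemma apowZ_nonzero al t : t <> 0%Z -> apowZ al t = Rpower (IZR (Z.abs t)) al.
Proof.
  intros Ht. unfold apowZ, apow. rewrite abs_IZR.
  destruct (Req_EM_T (IZR t) 0) as [E|]; [apply eq_IZR in E; lia | reflexivity].
Qed.

Lemma apowZ_0 al : apowZ al 0 = 0.
Proof. unfold apowZ, apow. destruct (Req_EM_T (IZR 0) 0); [reflexivity | lra]. Qed.

Lemma apowZ_opp al t : apowZ al (- t) = apowZ al t.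
Proof.
  destruct (Z.eq_dec t 0) as [->|Ht]; [reflexivity|].
  rewrite !apowZ_nonzero, Z.abs_opp by lia. reflexivity.
Qed.

(* The second differences of |t|^al at s = -2, -1, 0 are 2^al - 2, 2, 2^al - 2. *)
Definition kappa (al : R) : R := Rmin (al * (al - 1)) (Rpower 2 al - 2).

Definition mu (al r : R) : R := kappa al * Rpower r (al - 2).

Lemma kappa_pos al : 1 < al < 2 -> 0 < kappa al.
Proof.
  intros Hal. apply Rmin_glb_lt; [nra|].
  pose proof (Rpower_lt 2 1 al ltac:(lra) ltac:(lra)). rewrite Rpower_1 in H; lra.
Qed.

Lemma kappa_le_2 al : 1 < al < 2 -> kappa al <= 2.
Proof.
  intros Hal. eapply Rle_trans; [apply Rmin_r|].
  pose proof (Rpower_lt 2 al 2 ltac:(lra) ltac:(lra)).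
  replace (Rpower 2 2) with (INR 2 ^ 2) in H by (rewrite <- Rpower_pow; simpl; f_equal; lra).
  simpl in H. lra.
Qed.

Lemma mu_pos al r : 1 < al < 2 -> 0 < mu al r.
Proof. intros. apply Rmult_lt_0_compat; [apply kappa_pos; auto | apply Rpower_pos]. Qed.

Lemma apowZ_second_difference al r s :
  1 < al < 2 -> 1 <= r -> IZR (Z.abs s) <= r -> IZR (Z.abs (s + 2)) <= r ->
  mu al r <= apowZ al (s + 2) - 2 * apowZ al (s + 1) + apowZ al s.
Proof.
  intros Hal Hr Hs Hs2. unfold mu.
  pose proof (kappa_pos al Hal). pose proof (kappa_le_2 al Hal).
  assert (Rpower r (al - 2) <= 1) by (apply Rpower_le_1; lra).
  pose proof (Rpower_pos r (al - 2)).
  assert (positive : forall s, (1 <= s)%Z -> IZR (Z.abs (s + 2)) <= r ->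
    mu al r <= apowZ al (s + 2) - 2 * apowZ al (s + 1) + apowZ al s).
  { clear s Hs Hs2. intros s Hs Hs2. unfold mu.
    rewrite !apowZ_nonzero, !Z.abs_eq, !plus_IZR by lia.
    rewrite Z.abs_eq, plus_IZR in Hs2 by lia. apply IZR_le in Hs.
    pose proof (Rpower_second_difference al r (IZR s) Hal Hs Hs2).
    assert (kappa al <= al * (al - 1)) by apply Rmin_l. nra. }
  destruct (Z_lt_le_dec s (-2)) as [Hneg|Hnonneg].
  - pose proof (positive (- s - 2)%Z ltac:(lia)) as P.
    replace (- s - 2 + 2)%Z with (- s)%Z in P by lia.
    replace (- s - 2 + 1)%Z with (- (s + 1))%Z in P by lia.
    replace (- s - 2)%Z with (- (s + 2))%Z in P by lia.
    rewrite !apowZ_opp, Z.abs_opp in P. specialize (P Hs). unfold mu in P. lra.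
  - destruct (Z_lt_le_dec s 1) as [Hsmall|Hlarge]; [|apply positive; auto].
    assert (kappa al <= Rpower 2 al - 2) by apply Rmin_r.
    assert (E1 : apowZ al 1 = 1) by (rewrite apowZ_nonzero by lia; apply Rpower_1_base).
    assert (E2 : apowZ al 2 = Rpower 2 al) by (rewrite apowZ_nonzero by lia; reflexivity).
    assert (E1' : apowZ al (-1) = 1) by (rewrite apowZ_nonzero by lia; apply Rpower_1_base).
    assert (E2' : apowZ al (-2) = Rpower 2 al) by (rewrite apowZ_nonzero by lia; reflexivity).
    assert (kappa al * Rpower r (al - 2) <= kappa al) by nra.
    assert (s = -2 \/ s = -1 \/ s = 0)%Z as [ -> | [ -> | -> ] ] by lia; simpl;
      rewrite ?apowZ_0; lra.
Qed.

Lemma Zabs_between_le r a z c :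
  (a <= z <= c)%Z -> IZR (Z.abs a) <= r -> IZR (Z.abs c) <= r -> IZR (Z.abs z) <= r.
Proof.
  intros Hz Ha Hc. destruct (Z.le_ge_cases (Z.abs a) (Z.abs c)).
  - eapply Rle_trans; [|exact Hc]. apply IZR_le. lia.
  - eapply Rle_trans; [|exact Ha]. apply IZR_le. lia.
Qed.

Section Increments.
Variables (al r : R).
Hypothesis Hal : 1 < al < 2.
Hypothesis Hr : 1 <= r.

Lemma apowZ_difference_growth (n : nat) a :
  IZR (Z.abs a) <= r -> IZR (Z.abs (a + Z.of_nat n + 1)) <= r ->
  mu al r * INR n <=
    (apowZ al (a + Z.of_nat n + 1) - apowZ al (a + Z.of_nat n)) - (apowZ al (a + 1) - apowZ al a).
Proof.
  induction n as [|n IH]; intros Ha Hb.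
  - simpl. rewrite Z.add_0_r. lra.
  - rewrite Nat2Z.inj_succ in Hb |- *. rewrite S_INR.
    assert (Hmid : forall z, (a <= z <= a + Z.succ (Z.of_nat n) + 1)%Z -> IZR (Z.abs z) <= r)
      by (intros; eapply Zabs_between_le; eauto).
    specialize (IH Ha (Hmid (a + Z.of_nat n + 1)%Z ltac:(lia))).
    pose proof (apowZ_second_difference al r (a + Z.of_nat n) Hal Hr
      (Hmid (a + Z.of_nat n)%Z ltac:(lia)) (Hmid (a + Z.of_nat n + 2)%Z ltac:(lia))).
    replace (a + Z.succ (Z.of_nat n) + 1)%Z with (a + Z.of_nat n + 2)%Z by lia.
    replace (a + Z.succ (Z.of_nat n))%Z with (a + Z.of_nat n + 1)%Z by lia.
    lra.
Qed.

Lemma apowZ_increment_growth (e : nat) u u' :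
  (u <= u')%Z -> IZR (Z.abs u) <= r -> IZR (Z.abs (u' + Z.of_nat e)) <= r ->
  mu al r * INR e * IZR (u' - u) <=
    (apowZ al (u' + Z.of_nat e) - apowZ al u') - (apowZ al (u + Z.of_nat e) - apowZ al u).
Proof.
  induction e as [|e IH]; intros Hu Ha Hb.
  - simpl. rewrite !Z.add_0_r. lra.
  - rewrite Nat2Z.inj_succ in Hb |- *. rewrite S_INR.
    assert (Hmid : forall z, (u <= z <= u' + Z.succ (Z.of_nat e))%Z -> IZR (Z.abs z) <= r)
      by (intros; eapply Zabs_between_le; eauto).
    specialize (IH Hu Ha (Hmid (u' + Z.of_nat e)%Z ltac:(lia))).
    pose proof (apowZ_difference_growth (Z.to_nat (u' - u)) (u + Z.of_nat e)
      (Hmid (u + Z.of_nat e)%Z ltac:(lia))) as D.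
    rewrite Z2Nat.id, INR_IZR_INZ, Z2Nat.id in D by lia.
    replace (u + Z.of_nat e + (u' - u))%Z with (u' + Z.of_nat e)%Z in D by lia.
    specialize (D (Hmid (u' + Z.of_nat e + 1)%Z ltac:(lia))).
    replace (u' + Z.succ (Z.of_nat e))%Z with (u' + Z.of_nat e + 1)%Z by lia.
    replace (u + Z.succ (Z.of_nat e))%Z with (u + Z.of_nat e + 1)%Z by lia.
    lra.
Qed.

End Increments.

Lemma card_le_incl {T} (A B : T -> Prop) b :
  (forall x, A x -> B x) -> card_le B b -> card_le A b.
Proof. intros HAB HB l Hl Hin. apply HB; auto. Qed.

Lemma card_le_le {T} (A : T -> Prop) b b' : b <= b' -> card_le A b -> card_le A b'.
Proof. intros H HA l Hl Hin. specialize (HA l Hl Hin). lra. Qed.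

Lemma card_le_inj {T U} (A : T -> Prop) (B : U -> Prop) (f : T -> U) b :
  (forall x, A x -> B (f x)) ->
  (forall x y, A x -> A y -> f x = f y -> x = y) ->
  card_le B b -> card_le A b.
Proof.
  intros HAB Hinj HB l Hl Hin. rewrite <- (length_map f l). apply HB.
  - apply NoDup_map_NoDup_ForallPairs; auto. intros x y Hx Hy. apply Hinj; auto.
  - intros y Hy. apply in_map_iff in Hy. destruct Hy as [x [<- Hx]]. auto.
Qed.

Lemma card_le_split {T} (A : T -> Prop) (p : T -> bool) b1 b2 :
  card_le (fun x => A x /\ p x = true) b1 -> card_le (fun x => A x /\ p x = false) b2 ->
  card_le A (b1 + b2).
Proof.
  intros H1 H2 l Hl Hin. rewrite <- (filter_length p l), plus_INR.
  assert (INR (length (filter p l)) <= b1).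
  { apply H1; [apply NoDup_filter; auto|].
    intros x Hx. apply filter_In in Hx. split; [apply Hin|]; tauto. }
  assert (INR (length (filter (fun x => negb (p x)) l)) <= b2).
  { apply H2; [apply NoDup_filter; auto|].
    intros x Hx. apply filter_In in Hx. destruct Hx as [Hx Hpx].
    split; [auto | destruct (p x); simpl in *; congruence]. }
  lra.
Qed.

Fixpoint sumR (f : Z -> R) (l : list Z) : R :=
  match l with nil => 0 | v :: l' => f v + sumR f l' end.

Lemma sumR_le_length f l K : (forall v, In v l -> f v <= K) -> sumR f l <= K * INR (length l).
Proof.
  induction l as [|v l IH]; intros H; simpl sumR; [simpl; lra|].
  rewrite length_cons, S_INR.
  assert (f v <= K) by (apply H; left; auto).
  assert (sumR f l <= K * INR (length l)) by (apply IH; intros; apply H; right; auto).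
  lra.
Qed.

Lemma card_le_fibres {T} (A : T -> Prop) (o : T -> Z) (vs : list Z) (b : Z -> R) :
  (forall q, A q -> In (o q) vs) ->
  (forall v, card_le (fun q => A q /\ o q = v) (b v)) ->
  card_le A (sumR b vs).
Proof.
  revert A. induction vs as [|v vs IH]; intros A Hin Hb; simpl sumR.
  - intros [|x l] Hl HlA; [simpl; lra|]. destruct (Hin x (HlA x (or_introl eq_refl))).
  - apply (card_le_split A (fun q => Z.eqb (o q) v)).
    + apply (card_le_incl _ _ _ (fun q Hq => conj (proj1 Hq) (proj1 (Z.eqb_eq _ _) (proj2 Hq)))).
      apply Hb.
    + apply IH.
      * intros q [Hq Hv]. apply Z.eqb_neq in Hv. destruct (Hin q Hq); [congruence | auto].
      * intros w. eapply card_le_incl; [|apply (Hb w)]. tauto.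
Qed.

Lemma card_le_list (vs : list Z) : card_le (fun z => In z vs) (INR (length vs)).
Proof. intros l Hl Hin. apply le_INR, NoDup_incl_length; auto. Qed.

Definition zints (lo : Z) (n : nat) : list Z := map (fun i => (lo + Z.of_nat i)%Z) (seq 0 n).

Lemma In_zints lo n z : In z (zints lo n) <-> (lo <= z < lo + Z.of_nat n)%Z.
Proof.
  unfold zints. rewrite in_map_iff. split.
  - intros [i [<- Hi]]. apply in_seq in Hi. lia.
  - intros H. exists (Z.to_nat (z - lo)). rewrite in_seq, Z2Nat.id; lia.
Qed.

Lemma length_zints lo n : length (zints lo n) = n.
Proof. unfold zints. rewrite length_map. apply length_seq. Qed.

Lemma card_le_interval lo hi :
  (lo <= hi + 1)%Z -> card_le (fun z => (lo <= z <= hi)%Z) (IZR (hi - lo + 1)).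
Proof.
  intros H.
  eapply card_le_le;
    [|eapply card_le_incl; [|apply (card_le_list (zints lo (Z.to_nat (hi - lo + 1))))]].
  - rewrite length_zints, INR_IZR_INZ, Z2Nat.id by lia. lra.
  - intros z Hz. apply In_zints. lia.
Qed.

Lemma card_le_ball c x : 0 <= x -> card_le (fun t => IZR (Z.abs (t - c)) <= x) (1 + 2 * x).
Proof.
  intros Hx. set (n := Zfloor x).
  assert (Hn : (0 <= n)%Z) by (apply Zfloor_lub; auto).
  eapply card_le_le; [|eapply card_le_incl; [|apply (card_le_interval (c - n) (c + n))]].
  - pose proof (Zfloor_bound x). fold n in H.
    replace (c + n - (c - n) + 1)%Z with (2 * n + 1)%Z by ring.
    rewrite plus_IZR, mult_IZR. lra.
  - intros t Ht. apply Zfloor_lub in Ht. fold n in Ht. cbv beta. lia.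
  - lia.
Qed.

(* All of T lies within w / d0 of any one of its points. *)
Lemma card_le_gap (T : Z -> Prop) (g : Z -> R) d0 w :
  0 < d0 -> 0 <= w ->
  (forall t t', T t -> T t' -> (t < t')%Z -> d0 * IZR (t' - t) <= Rabs (g t' - g t)) ->
  (forall t t', T t -> T t' -> Rabs (g t' - g t) <= w) ->
  card_le T (1 + 2 * (w / d0)).
Proof.
  intros Hd Hw Hgap Hosc [|x l] Hl Hin;
    [simpl; assert (0 <= w / d0) by (apply Rdiv_nonneg; lra); lra|].
  assert (Hx : T x) by (apply Hin; left; auto).
  apply (card_le_ball x (w / d0)); [apply Rdiv_nonneg; lra | exact Hl |].
  intros y Hy. apply Hin in Hy. apply Rle_div_of_mul; [auto|].
  destruct (Z.lt_trichotomy x y) as [Hxy|[<-|Hyx]].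
  - rewrite Z.abs_eq by lia. eapply Rle_trans; [apply Hgap|apply Hosc]; auto.
  - rewrite Z.sub_diag. simpl. lra.
  - replace (Z.abs (y - x)) with (x - y)%Z by lia.
    eapply Rle_trans; [apply Hgap|apply Hosc]; auto.
Qed.

Definition increment_count_bound (al C0 r : R) (v : Z) : R :=
  1 + 4 * C0 / (mu al r * IZR (Z.abs v)).

Lemma increment_count_bound_nonneg al C0 r v :
  1 < al < 2 -> 0 <= C0 -> 0 <= increment_count_bound al C0 r v.
Proof.
  intros Hal HC0. unfold increment_count_bound.
  destruct (Z.eq_dec v 0) as [->|Hv].
  - rewrite Rmult_0_r. unfold Rdiv. rewrite Rinv_0. lra.
  - assert (0 <= 4 * C0 / (mu al r * IZR (Z.abs v))); [|lra].
    apply Rdiv_nonneg; [lra|]. apply Rmult_lt_0_compat; [apply mu_pos; auto|apply IZR_lt; lia].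
Qed.

(* Convexity makes t |-> apowZ al (t + d) - apowZ al t strictly monotone with
   gaps at least mu al r * |d|, so it meets a window of width 2 C0 rarely. *)
Lemma card_le_increment_level al C0 r d H :
  1 < al < 2 -> 0 <= C0 -> 1 <= r -> d <> 0%Z ->
  card_le (fun t => IZR (Z.abs t) <= r /\ IZR (Z.abs (t + d)) <= r /\
                    Rabs (apowZ al (t + d) - apowZ al t - H) <= C0)
    (increment_count_bound al C0 r d).
Proof.
  intros Hal HC0 Hr Hd.
  assert (Hmu := mu_pos al r Hal).
  assert (Hd' : 0 < IZR (Z.abs d)) by (apply IZR_lt; lia).
  eapply card_le_le; [|apply (card_le_gap _ (fun t => apowZ al (t + d) - apowZ al t)
                           (mu al r * IZR (Z.abs d)) (2 * C0))].
  - unfold increment_count_bound. right. field. split; lra.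
  - apply Rmult_lt_0_compat; auto.
  - lra.
  - intros t t' [Ht [Htd _]] [Ht' [Htd' _]] Htt.
    assert (0 <= IZR (t' - t)) by (apply IZR_le; lia).
    assert (0 <= mu al r * IZR (Z.abs d) * IZR (t' - t)) by (apply Rmult_le_pos; [nra|auto]).
    destruct (Z_lt_le_dec 0 d) as [Hpos|Hneg].
    + pose proof (apowZ_increment_growth al r Hal Hr (Z.to_nat d) t t' ltac:(lia) Ht) as P.
      rewrite Z2Nat.id, INR_IZR_INZ, Z2Nat.id in P by lia. specialize (P Htd').
      rewrite Z.abs_eq by lia. rewrite Rabs_right; [lra|]. rewrite Z.abs_eq in * by lia. lra.
    + pose proof (apowZ_increment_growth al r Hal Hr (Z.to_nat (- d)) (t + d) (t' + d)
        ltac:(lia) Htd) as P.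
      rewrite Z2Nat.id, INR_IZR_INZ, Z2Nat.id in P by lia.
      replace (t' + d + - d)%Z with t' in P by lia.
      replace (t + d + - d)%Z with t in P by lia.
      replace (t' + d - (t + d))%Z with (t' - t)%Z in P by lia.
      specialize (P Ht'). rewrite Z.abs_neq in * by lia.
      rewrite Rabs_left1; lra.
  - intros t t' [_ [_ W]] [_ [_ W']].
    apply Rabs_le. apply Rabs_le_bounds in W. apply Rabs_le_bounds in W'. lra.
Qed.

(* A family of objects q, each encoded by a base point [a q] and a step [b q - a q]
   whose apowZ-increment is within C0 of a level that depends on the step only. *)
Definition increment_family (al C0 : R) {T} (A : T -> Prop) (a b : T -> Z) (level : T -> R) :=
  (forall q, A q -> a q <> b q /\ Rabs (apowZ al (b q) - apowZ al (a q) - level q) <= C0) /\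
  (forall q q', A q -> A q' -> (b q - a q = b q' - a q')%Z ->
     level q = level q' /\ (a q = a q' -> q = q')).

Lemma increment_family_incl al C0 {T} (A A' : T -> Prop) a b level :
  (forall q, A' q -> A q) -> increment_family al C0 A a b level ->
  increment_family al C0 A' a b level.
Proof. intros H [H1 H2]. split; auto. Qed.

Lemma card_le_by_increments al C0 r (vs : list Z) {T} (A : T -> Prop) a b level :
  1 < al < 2 -> 0 <= C0 -> 1 <= r ->
  increment_family al C0 A a b level ->
  (forall q, A q -> In (b q - a q)%Z vs /\ IZR (Z.abs (a q)) <= r /\ IZR (Z.abs (b q)) <= r) ->
  card_le A (sumR (increment_count_bound al C0 r) vs).
Proof.
  intros Hal HC0 Hr [Hlevel Hdet] Hbd.
  apply (card_le_fibres A (fun q => b q - a q)%Z); [apply Hbd|].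
  intros v [|q0 l] Hl Hin; [simpl; apply increment_count_bound_nonneg; auto|].
  destruct (Hin q0 (or_introl eq_refl)) as [Hq0 <-].
  assert (Hstep : (b q0 - a q0 <> 0)%Z) by (destruct (Hlevel q0 Hq0); lia).
  eapply (card_le_inj (fun q => A q /\ (b q - a q = b q0 - a q0)%Z) _ a);
    [| | apply (card_le_increment_level al C0 r _ (level q0) Hal HC0 Hr Hstep)
     | exact Hl | exact Hin].
  - intros q [Hq Hv]. destruct (Hbd q Hq) as [_ [Ha Hb]]. destruct (Hlevel q Hq) as [_ Hres].
    destruct (Hdet q q0 Hq Hq0 Hv) as [<- _].
    rewrite <- Hv. replace (a q + (b q - a q))%Z with (b q) by lia. auto.
  - intros q q' [Hq Hv] [Hq' Hv'] Ha. apply (Hdet q q' Hq Hq'); congruence.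
Qed.

Fixpoint sym_range (n : nat) : list Z :=
  match n with
  | O => 0%Z :: nil
  | S n' => Z.of_nat n :: (- Z.of_nat n)%Z :: sym_range n'
  end.

Lemma In_sym_range n v : (Z.abs v <= Z.of_nat n)%Z -> In v (sym_range n).
Proof.
  induction n as [|n IH]; intros Hv; simpl; [lia|].
  destruct (Z.eq_dec v (Z.of_nat (S n))) as [E|E]; [left; auto|].
  destruct (Z.eq_dec v (- Z.of_nat (S n))) as [E'|E']; [right; left; auto|].
  right; right. apply IH. lia.
Qed.

Lemma Rpower_step_ge p x : 0 <= p <= 1 -> 0 < x -> Rpower x p + p / (x + 1) <= Rpower (x + 1) p.
Proof.
  intros Hp Hx.
  pose proof (Rpower_increment_ge p x (x + 1) (x + 1) Hx ltac:(lra) ltac:(lra) Hp) as P.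
  assert (E : Rpower (x + 1) (p - 1) * (x + 1) = Rpower (x + 1) p).
  { rewrite <- Rpower_plus_1 by lra. f_equal. ring. }
  assert (1 <= Rpower (x + 1) p) by (apply Rpower_ge_1; lra).
  assert (/ (x + 1) <= Rpower (x + 1) (p - 1)).
  { apply (Rmult_le_reg_r (x + 1)); [lra|]. rewrite Rinv_l by lra. lra. }
  unfold Rdiv. replace (x + 1 - x) with 1 in P by ring.
  assert (p * / (x + 1) <= p * Rpower (x + 1) (p - 1)) by (apply Rmult_le_compat_l; lra).
  lra.
Qed.

(* Summing Rpower_step_ge: 1 + 1/2 + ... + 1/n <= n^(al-1) / (al-1). *)
Lemma sumR_sym_range_le al W (f : Z -> R) (n : nat) :
  1 < al < 2 -> 0 <= W -> (1 <= n)%nat ->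
  (forall v, f v <= 1 + W / IZR (Z.abs v)) ->
  sumR f (sym_range n) <= 2 * INR n + 1 + 2 * W / (al - 1) * Rpower (INR n) (al - 1).
Proof.
  intros Hal HW Hn Hf.
  assert (HW' : W <= W / (al - 1)).
  { apply Rle_div_of_mul; [lra|]. nra. }
  induction n as [|n IH]; [lia|].
  change (sym_range (S n)) with (Z.of_nat (S n) :: (- Z.of_nat (S n))%Z :: sym_range n).
  cbn [sumR]. pose proof (Hf (Z.of_nat (S n))) as F1. pose proof (Hf (- Z.of_nat (S n))%Z) as F2.
  rewrite Z.abs_opp in F2. rewrite Z.abs_eq in F1, F2 by lia. rewrite <- INR_IZR_INZ in F1, F2.
  destruct n as [|n].
  - pose proof (Hf 0%Z) as F0. simpl in *. rewrite Rpower_1_base.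
    unfold Rdiv in *. rewrite ?Rinv_0, ?Rinv_1 in *. lra.
  - specialize (IH ltac:(lia)). repeat rewrite S_INR in *.
    pose proof (pos_INR n).
    pose proof (Rpower_step_ge (al - 1) (INR (S n)) ltac:(lra) ltac:(rewrite S_INR; lra)) as P.
    rewrite S_INR in P.
    assert (2 * W / (al - 1) * (Rpower (INR n + 1) (al - 1) + (al - 1) / (INR n + 1 + 1))
            <= 2 * W / (al - 1) * Rpower (INR n + 1 + 1) (al - 1)).
    { apply Rmult_le_compat_l; [apply Rdiv_nonneg; lra | exact P]. }
    assert (2 * W / (al - 1) * ((al - 1) / (INR n + 1 + 1)) = 2 * (W / (INR n + 1 + 1)))
      by (field; lra).
    lra.
Qed.

Lemma sumR_increment_count_sym_range al C0 (n : nat) :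
  1 < al < 2 -> 0 <= C0 -> (1 <= n)%nat ->
  sumR (increment_count_bound al C0 (INR n)) (sym_range n)
    <= (3 + 8 * C0 / (kappa al * (al - 1))) * INR n.
Proof.
  intros Hal HC0 Hn.
  pose proof (kappa_pos al Hal).
  assert (Hn1 : 1 <= INR n) by (apply (le_INR 1); auto).
  pose proof (Rpower_pos (INR n) (al - 2)).
  set (W := 4 * C0 / mu al (INR n)).
  assert (HW : 0 <= W) by (apply Rdiv_nonneg; [lra | apply mu_pos; auto]).
  eapply Rle_trans; [apply (sumR_sym_range_le al W); auto|].
  - intros v. unfold increment_count_bound, W. destruct (Z.eq_dec v 0) as [->|Hv].
    + simpl. unfold Rdiv. rewrite Rmult_0_r, !Rinv_0. lra.
    + pose proof (mu_pos al (INR n) Hal). assert (IZR (Z.abs v) <> 0) by (apply not_0_IZR; lia).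
      right. field. auto with real.
  - (* W n^(al-1) = 4 C0 n / kappa: the factor n^(al-2) in mu cancels *)
    assert (E : 2 * W / (al - 1) * Rpower (INR n) (al - 1)
                = 8 * C0 / (kappa al * (al - 1)) * INR n).
    { assert (X : Rpower (INR n) (al - 1) = Rpower (INR n) (al - 2) * INR n)
        by (rewrite <- Rpower_plus_1 by lra; f_equal; ring).
      unfold W, mu. rewrite X. field. repeat split; lra. }
    rewrite E. assert (2 * INR n + 1 <= 3 * INR n) by lra. lra.
Qed.

Definition annulus (c w : Z) : list Z :=
  zints (c - w) (Z.to_nat (2 * w + 1)) ++ zints (- (c + w)) (Z.to_nat (2 * w + 1)).

Lemma In_annulus c w v : (0 <= w)%Z -> (c - w <= Z.abs v <= c + w)%Z -> In v (annulus c w).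
Proof. intros. unfold annulus. rewrite in_app_iff, !In_zints, Z2Nat.id; lia. Qed.

Lemma length_annulus c w : (0 <= w)%Z -> INR (length (annulus c w)) = 2 * (2 * IZR w + 1).
Proof.
  intros. unfold annulus. rewrite length_app, !length_zints, plus_INR, INR_IZR_INZ, Z2Nat.id by lia.
  rewrite plus_IZR, mult_IZR. ring.
Qed.

(* On the annulus |v| is comparable to the radius c + w, so every term is O(1). *)
Lemma sumR_increment_count_annulus al C0 c w :
  1 < al < 2 -> 0 <= C0 -> (1 <= w)%Z -> (2 * w <= c)%Z ->
  sumR (increment_count_bound al C0 (IZR (c + w))) (annulus c w)
    <= 6 * (1 + 12 * C0 / kappa al) * IZR w.
Proof.
  intros Hal HC0 Hw Hc.
  pose proof (kappa_pos al Hal).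
  set (r := IZR (c + w)).
  assert (Hr : 1 <= r) by (apply IZR_le; lia).
  assert (Hpow : 1 <= Rpower r (al - 2) * r).
  { rewrite <- Rpower_plus_1 by lra. apply Rpower_ge_1; lra. }
  pose proof (Rpower_pos r (al - 2)).
  assert (Hw' : 1 <= IZR w) by (apply IZR_le; lia).
  eapply Rle_trans; [apply (sumR_le_length _ _ (1 + 12 * C0 / kappa al))|].
  - intros v Hv. unfold annulus in Hv. rewrite in_app_iff, !In_zints, Z2Nat.id in Hv by lia.
    assert (Hv3 : r <= 3 * IZR (Z.abs v)) by (unfold r; rewrite <- mult_IZR; apply IZR_le; lia).
    unfold increment_count_bound.
    replace (12 * C0 / kappa al) with (4 * C0 / (kappa al / 3)) by (field; lra).
    assert (4 * C0 / (mu al r * IZR (Z.abs v)) <= 4 * C0 / (kappa al / 3)); [|lra].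
    apply Rdiv_le_den; [lra|]. unfold mu. split; [lra|].
    assert (kappa al * (Rpower r (al - 2) * r)
            <= kappa al * (Rpower r (al - 2) * (3 * IZR (Z.abs v))))
      by (apply Rmult_le_compat_l; [lra|]; apply Rmult_le_compat_l; lra).
    nra.
  - rewrite length_annulus by lia.
    assert (0 <= 12 * C0 / kappa al) by (apply Rdiv_nonneg; lra). nra.
Qed.

Definition slice_const (al C0 : R) : R :=
  2 * (20 * (3 + 8 * C0 / (kappa al * (al - 1))) + 24 * (1 + 12 * C0 / kappa al)).

Lemma slice_const_ge al C0 : 1 < al < 2 -> 0 <= C0 -> 13 <= slice_const al C0.
Proof.
  intros Hal HC0. pose proof (kappa_pos al Hal). unfold slice_const.
  assert (0 <= 8 * C0 / (kappa al * (al - 1))) by (apply Rdiv_nonneg; nra).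
  assert (0 <= 12 * C0 / kappa al) by (apply Rdiv_nonneg; lra).
  lra.
Qed.

Lemma card_le_fibres_bounded {T} (A : T -> Prop) (o : T -> Z) L b :
  (0 <= L)%Z -> 0 <= b ->
  (forall q, A q -> (Z.abs (o q) <= L)%Z) ->
  (forall v, card_le (fun q => A q /\ o q = v) b) ->
  card_le A ((2 * IZR L + 1) * b).
Proof.
  intros HL Hb Ho Hfib.
  eapply card_le_le;
    [|apply (card_le_fibres A o (zints (- L) (Z.to_nat (2 * L + 1))) (fun _ => b))].
  - eapply Rle_trans; [apply (sumR_le_length _ _ b); intros; lra|].
    rewrite length_zints, INR_IZR_INZ, Z2Nat.id, plus_IZR, mult_IZR by lia. lra.
  - intros q Hq. specialize (Ho q Hq). apply In_zints. lia.
  - exact Hfib.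
Qed.

Section Admissible_pairs.
Variables (al C0 : R) (M G : Z).
Hypothesis Hal : 1 < al < 2.
Hypothesis HC0 : 0 <= C0.
Hypothesis HM : (1 <= M)%Z.

Definition small (x : Z) : Prop := (Z.abs x <= M)%Z.
Definition near_max (x : Z) : Prop := (G + 1 - 2 * M <= Z.abs x <= G + 2 * M)%Z.

Definition admissible_pair (a b : Z) : Prop :=
  (small a /\ small b) \/ (small a /\ near_max b) \/ (near_max a /\ small b).

Lemma card_le_increments_bounded {T} (A : T -> Prop) a b level :
  increment_family al C0 A a b level ->
  (forall q, A q -> (Z.abs (a q) <= 10 * M /\ Z.abs (b q) <= 10 * M)%Z) ->
  card_le A (20 * (3 + 8 * C0 / (kappa al * (al - 1))) * IZR M).
Proof.
  intros Hfam Hbd. set (n := Z.to_nat (20 * M)).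
  assert (En : INR n = IZR (20 * M)) by (unfold n; rewrite INR_IZR_INZ, Z2Nat.id by lia; auto).
  assert (Hn : 1 <= INR n) by (rewrite En; apply IZR_le; lia).
  assert (Hvs : forall q, A q -> In (b q - a q)%Z (sym_range n) /\
                  IZR (Z.abs (a q)) <= INR n /\ IZR (Z.abs (b q)) <= INR n).
  { intros q Hq. destruct (Hbd q Hq). rewrite En.
    split; [apply In_sym_range; unfold n; lia | split; apply IZR_le; lia]. }
  eapply card_le_le; [|exact (card_le_by_increments _ _ _ _ _ _ _ _ Hal HC0 Hn Hfam Hvs)].
  eapply Rle_trans; [apply sumR_increment_count_sym_range; auto; unfold n; lia|].
  rewrite En, mult_IZR. lra.
Qed.

Lemma card_le_increments_annular {T} (A : T -> Prop) a b level :
  (8 * M <= G)%Z -> increment_family al C0 A a b level ->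
  (forall q, A q -> (Z.abs (a q) <= G + 4 * M /\ Z.abs (b q) <= G + 4 * M /\
                     G - 4 * M <= Z.abs (b q - a q) <= G + 4 * M)%Z) ->
  card_le A (24 * (1 + 12 * C0 / kappa al) * IZR M).
Proof.
  intros HG Hfam Hbd.
  assert (Hr : 1 <= IZR (G + 4 * M)) by (apply IZR_le; lia).
  assert (Hvs : forall q, A q -> In (b q - a q)%Z (annulus G (4 * M)) /\
                  IZR (Z.abs (a q)) <= IZR (G + 4 * M) /\ IZR (Z.abs (b q)) <= IZR (G + 4 * M)).
  { intros q Hq. destruct (Hbd q Hq) as (? & ? & ?).
    split; [apply In_annulus; lia | split; apply IZR_le; lia]. }
  eapply card_le_le; [|exact (card_le_by_increments _ _ _ _ _ _ _ _ Hal HC0 Hr Hfam Hvs)].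
  eapply Rle_trans; [apply sumR_increment_count_annulus; auto; lia|].
  rewrite mult_IZR. lra.
Qed.

Lemma card_le_small_or_near_max : card_le (fun x => small x \/ near_max x) (13 * IZR M).
Proof.
  assert (IM : 1 <= IZR M) by (apply IZR_le; auto).
  apply (card_le_le _ (IZR (M - - M + 1) + INR (length (annulus G (2 * M))))).
  { rewrite length_annulus by lia. rewrite !plus_IZR, minus_IZR, opp_IZR, mult_IZR. lra. }
  apply (card_le_split _ (fun x => Z.abs x <=? M)%Z).
  - eapply card_le_incl; [|apply card_le_interval; lia].
    intros x [_ Hx]. apply Z.leb_le in Hx. cbv beta. lia.
  - eapply card_le_incl; [|apply card_le_list].
    intros x [Hx Hp]. apply Z.leb_gt in Hp. apply In_annulus; unfold small, near_max in Hx; lia.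
Qed.

(* Pairs of two small frequencies have |b - a| = O(M); pairs of a small and a
   near-maximal frequency have |b - a| close to G, i.e. in an annulus when G >> M. *)
Lemma card_le_admissible_increments {T} (A : T -> Prop) a b level :
  increment_family al C0 A a b level ->
  (forall q, A q -> admissible_pair (a q) (b q)) ->
  card_le A (slice_const al C0 * IZR M).
Proof.
  intros Hfam Hadm.
  pose proof (kappa_pos al Hal).
  assert (IM : 1 <= IZR M) by (apply IZR_le; auto).
  unfold slice_const.
  set (cA := 20 * (3 + 8 * C0 / (kappa al * (al - 1)))).
  set (cB := 24 * (1 + 12 * C0 / kappa al)).
  assert (0 <= cA) by (assert (0 <= 8 * C0 / (kappa al * (al - 1))) by (apply Rdiv_nonneg; nra);
                       unfold cA; lra).
  assert (0 <= cB)
    by (assert (0 <= 12 * C0 / kappa al) by (apply Rdiv_nonneg; lra); unfold cB; lra).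
  apply (card_le_le _ (cA * IZR M + (cA + cB) * IZR M)); [nra|].
  apply (card_le_split A (fun q => andb (Z.abs (a q) <=? M)%Z (Z.abs (b q) <=? M)%Z)).
  - apply (card_le_increments_bounded _ a b level).
    + eapply increment_family_incl; [|exact Hfam]. tauto.
    + intros q [Hq Hp]. rewrite Bool.andb_true_iff, !Z.leb_le in Hp. lia.
  - assert (Hmixed : forall q, A q /\ andb (Z.abs (a q) <=? M)%Z (Z.abs (b q) <=? M)%Z = false ->
      (Z.abs (a q) <= G + 2 * M /\ Z.abs (b q) <= G + 2 * M /\
       G + 1 - 3 * M <= Z.abs (b q - a q) <= G + 3 * M)%Z).
    { intros q [Hq Hp]. rewrite Bool.andb_false_iff, !Z.leb_gt in Hp.
      specialize (Hadm q Hq). unfold admissible_pair, small, near_max in Hadm. lia. }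
    assert (Hfam' : increment_family al C0
      (fun q => A q /\ andb (Z.abs (a q) <=? M)%Z (Z.abs (b q) <=? M)%Z = false) a b level)
      by (eapply increment_family_incl; [|exact Hfam]; tauto).
    destruct (Z_lt_le_dec G (8 * M)).
    + eapply card_le_le; [|apply (card_le_increments_bounded _ _ _ _ Hfam')]; [fold cA; nra|].
      intros q Hq. specialize (Hmixed q Hq). lia.
    + eapply card_le_le; [|apply (card_le_increments_annular _ _ _ _ ltac:(auto) Hfam')];
        [fold cB; nra|].
      intros q Hq. specialize (Hmixed q Hq). lia.
Qed.

End Admissible_pairs.

Section Resonant_quadruples.
Variables (al C0 m : R) (N1 N2 N3 G : Z) (j : nat) (B : Z -> Z -> Z -> Z -> Prop).
Hypothesis Hal : 1 < al < 2.
Hypothesis HC0 : 0 <= C0.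
Hypothesis HN : (1 <= N1 /\ 1 <= N2 /\ 1 <= N3)%Z.
Hypothesis Hj : j = 1%nat \/ j = 2%nat \/ j = 3%nat.
Hypothesis Hmax : sel3 j N1 N2 N3 = Nmax3 N1 N2 N3.
Hypothesis B_resonant : forall k k1 k2 k3, B k k1 k2 k3 ->
  k = (k1 - k2 + k3)%Z /\
  Rabs (apowZ al k1 - apowZ al k2 + apowZ al k3 - apowZ al k - m) <= C0.
Hypothesis B_frequencies : forall k k1 k2 k3, B k k1 k2 k3 ->
  (k2 <> k1 /\ k2 <> k3 /\ Z.abs k1 <= N1 /\ Z.abs k2 <= N2 /\ Z.abs k3 <= N3 /\
   Z.abs (sel3 j k1 k2 k3) <= G < Z.abs k)%Z.

Let M := Nmed3 N1 N2 N3.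

Lemma Nmed_ge_1 : (1 <= M)%Z.
Proof. unfold M, Nmed3, Nmax3, Nmin3. lia. Qed.

Lemma B_sizes k k1 k2 k3 : B k k1 k2 k3 ->
  near_max M G k /\
  (j = 1%nat /\ near_max M G k1 /\ small M k2 /\ small M k3 \/
   j = 2%nat /\ small M k1 /\ near_max M G k2 /\ small M k3 \/
   j = 3%nat /\ small M k1 /\ small M k2 /\ near_max M G k3).
Proof.
  intros Hq. destruct (B_resonant _ _ _ _ Hq) as [Ek _].
  pose proof (B_frequencies _ _ _ _ Hq) as F.
  unfold near_max, small, M, Nmed3, Nmax3, Nmin3 in *.
  destruct Hj as [ -> | [ -> | -> ] ]; simpl in Hmax, F; lia.
Qed.

Ltac rearrange_resonance H :=
  match goal with
  | |- Rabs ?x <= _ =>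
    match type of H with
    | Rabs ?y <= _ =>
      first [ replace x with y by ring | replace x with (- y) by ring; rewrite Rabs_Ropp ]
    end
  end; exact H.

Ltac solve_increment_family :=
  split;
  [ intros [[? ?] ?] Hq; cbn in Hq |- *;
    destruct (B_resonant _ _ _ _ Hq) as [? Hres];
    destruct (B_frequencies _ _ _ _ Hq) as (? & ? & _);
    split; [lia | rearrange_resonance Hres]
  | intros [[? ?] ?] [[? ?] ?] Hq Hq' Hv; cbn in Hq, Hq', Hv |- *;
    destruct (B_resonant _ _ _ _ Hq) as [? _]; destruct (B_resonant _ _ _ _ Hq') as [? _];
    split; [| intros]; repeat f_equal; lia ].

Ltac solve_admissible :=
  intros [[? ?] ?] Hq; cbn in Hq |- *;
  pose proof (B_sizes _ _ _ _ Hq); pose proof (B_resonant _ _ _ _ Hq);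
  unfold admissible_pair, small, near_max in *; lia.

Lemma card_le_B_slice_k k :
  card_le (fun q : Z * Z * Z => let '(k1, k2, k3) := q in B k k1 k2 k3) (slice_const al C0 * IZR M).
Proof.
  apply (card_le_admissible_increments al C0 M G Hal HC0 Nmed_ge_1 _
           (fun '(_, k2, _) => k2) (fun '(_, _, k3) => k3)
           (fun '(k1, _, _) => m + apowZ al k - apowZ al k1)).
  - solve_increment_family.
  - solve_admissible.
Qed.

Lemma card_le_B_slice_k1 k1 :
  card_le (fun q : Z * Z * Z => let '(k, k2, k3) := q in B k k1 k2 k3) (slice_const al C0 * IZR M).
Proof.
  apply (card_le_admissible_increments al C0 M G Hal HC0 Nmed_ge_1 _
           (fun '(_, k2, _) => k2) (fun '(_, _, k3) => k3)
           (fun '(k, _, _) => m + apowZ al k - apowZ al k1)).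
  - solve_increment_family.
  - solve_admissible.
Qed.

Lemma card_le_B_slice_k3 k3 :
  card_le (fun q : Z * Z * Z => let '(k, k1, k2) := q in B k k1 k2 k3) (slice_const al C0 * IZR M).
Proof.
  apply (card_le_admissible_increments al C0 M G Hal HC0 Nmed_ge_1 _
           (fun '(_, _, k2) => k2) (fun '(_, k1, _) => k1)
           (fun '(k, _, _) => m + apowZ al k - apowZ al k3)).
  - solve_increment_family.
  - solve_admissible.
Qed.

(* Fixing k2, pair it with whichever of k1, k3 is small: k3 unless j = 3. *)
Lemma card_le_B_slice_k2 k2 :
  card_le (fun q : Z * Z * Z => let '(k, k1, k3) := q in B k k1 k2 k3) (slice_const al C0 * IZR M).
Proof.
  destruct (Nat.eq_dec j 3).
  - apply (card_le_admissible_increments al C0 M G Hal HC0 Nmed_ge_1 _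
             (fun '(_, k1, _) => k1) (fun '(k, _, _) => k)
             (fun '(_, _, k3) => apowZ al k3 - apowZ al k2 - m)).
    + solve_increment_family.
    + solve_admissible.
  - apply (card_le_admissible_increments al C0 M G Hal HC0 Nmed_ge_1 _
             (fun '(_, _, k3) => k3) (fun '(k, _, _) => k)
             (fun '(_, k1, _) => apowZ al k1 - apowZ al k2 - m)).
    + solve_increment_family.
    + solve_admissible.
Qed.

Lemma card_le_B_slice_k_k2 k k2 :
  card_le (fun q : Z * Z => let '(k1, k3) := q in B k k1 k2 k3) (slice_const al C0 * IZR M).
Proof.
  pose proof (slice_const_ge al C0 Hal HC0). assert (1 <= IZR M) by (apply IZR_le, Nmed_ge_1).
  apply (card_le_le _ (13 * IZR M)); [nra|].
  apply (card_le_inj _ (fun x => small M x \/ near_max M G x) (fun '(k1, _) => k1));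
    [| | exact (card_le_small_or_near_max M G Nmed_ge_1)].
  - intros [k1 k3] Hq. cbn in Hq |- *. destruct (B_sizes _ _ _ _ Hq) as [_ Hs]. tauto.
  - intros [k1 k3] [k1' k3'] Hq Hq' E. cbn in *.
    destruct (B_resonant _ _ _ _ Hq) as [? _]. destruct (B_resonant _ _ _ _ Hq') as [? _].
    f_equal; lia.
Qed.

Lemma card_le_B_slice_k1_k3 k1 k3 :
  card_le (fun q : Z * Z => let '(k, k2) := q in B k k1 k2 k3) (slice_const al C0 * IZR M).
Proof.
  pose proof (slice_const_ge al C0 Hal HC0). assert (1 <= IZR M) by (apply IZR_le, Nmed_ge_1).
  apply (card_le_le _ (13 * IZR M)); [nra|].
  apply (card_le_inj _ (fun x => small M x \/ near_max M G x) (fun '(_, k2) => k2));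
    [| | exact (card_le_small_or_near_max M G Nmed_ge_1)].
  - intros [k k2] Hq. cbn in Hq |- *. destruct (B_sizes _ _ _ _ Hq) as [_ Hs]. tauto.
  - intros [k k2] [k' k2'] Hq Hq' E. cbn in *.
    destruct (B_resonant _ _ _ _ Hq) as [? _]. destruct (B_resonant _ _ _ _ Hq') as [? _].
    f_equal; lia.
Qed.

Ltac fibre_to_slice :=
  first
  [ intros [[[? ?] ?] ?] [Hq Ev]; cbn in Hq, Ev |- *; rewrite <- Ev; exact Hq
  | intros [[[? ?] ?] ?] [[[? ?] ?] ?] [_ ?] [_ ?] ?; cbn in *; congruence ].

(* Fibre over a frequency k_i with N_i = Nmin; each fibre is a one-frequency slice. *)
Lemma card_le_B :
  card_le (fun q : Z * Z * Z * Z => let '(k, k1, k2, k3) := q in B k k1 k2 k3)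
    (3 * IZR (Nmin3 N1 N2 N3) * (slice_const al C0 * IZR M)).
Proof.
  set (L := Nmin3 N1 N2 N3).
  pose proof (slice_const_ge al C0 Hal HC0). assert (1 <= IZR M) by (apply IZR_le, Nmed_ge_1).
  assert (HL : (1 <= L)%Z) by (unfold L, Nmin3; lia).
  assert (1 <= IZR L) by (apply IZR_le, HL).
  assert (0 <= slice_const al C0 * IZR M) by nra.
  apply (card_le_le _ ((2 * IZR L + 1) * (slice_const al C0 * IZR M))); [nra|].
  assert (L = N1 \/ L = N2 \/ L = N3)%Z as [EL|[EL|EL]] by (unfold L, Nmin3; lia).
  - apply (card_le_fibres_bounded _ (fun '(_, k1, _, _) => k1)); [lia | auto | |].
    + intros [[[k k1] k2] k3] Hq. pose proof (B_frequencies _ _ _ _ Hq). lia.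
    + intros v. eapply (card_le_inj _ _ (fun '(k, _, k2, k3) => (k, k2, k3)));
        [..| exact (card_le_B_slice_k1 v)]; fibre_to_slice.
  - apply (card_le_fibres_bounded _ (fun '(_, _, k2, _) => k2)); [lia | auto | |].
    + intros [[[k k1] k2] k3] Hq. pose proof (B_frequencies _ _ _ _ Hq). lia.
    + intros v. eapply (card_le_inj _ _ (fun '(k, k1, _, k3) => (k, k1, k3)));
        [..| exact (card_le_B_slice_k2 v)]; fibre_to_slice.
  - apply (card_le_fibres_bounded _ (fun '(_, _, _, k3) => k3)); [lia | auto | |].
    + intros [[[k k1] k2] k3] Hq. pose proof (B_frequencies _ _ _ _ Hq). lia.
    + intros v. eapply (card_le_inj _ _ (fun '(k, k1, k2, _) => (k, k1, k2)));
        [..| exact (card_le_B_slice_k3 v)]; fibre_to_slice.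
Qed.

End Resonant_quadruples.

Lemma inB_resonant al C0 m N N1 N2 N3 j Gamma k k1 k2 k3 :
  inB al C0 m N N1 N2 N3 j Gamma k k1 k2 k3 ->
  k = (k1 - k2 + k3)%Z /\
  Rabs (apowZ al k1 - apowZ al k2 + apowZ al k3 - apowZ al k - m) <= C0.
Proof. intros [(Ek & _ & _ & Hres & _) _]. split; [exact Ek | exact Hres]. Qed.

Lemma inB_frequencies al C0 m N N1 N2 N3 j Gamma k k1 k2 k3 :
  inB al C0 m N N1 N2 N3 j Gamma k k1 k2 k3 ->
  (k2 <> k1 /\ k2 <> k3 /\ Z.abs k1 <= N1 /\ Z.abs k2 <= N2 /\ Z.abs k3 <= N3 /\
   Z.abs (sel3 j k1 k2 k3) <= Zfloor Gamma < Z.abs k)%Z.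
Proof.
  intros [(_ & D1 & D3 & _ & _ & B1 & B2 & B3) [Gj Gk]].
  apply Zfloor_le in Gj. rewrite ZfloorZ in Gj.
  assert (Zfloor Gamma < Z.abs k)%Z
    by (apply lt_IZR; pose proof (Zfloor_bound Gamma); lra).
  repeat split; assumption.
Qed.

Theorem lemma2p11 :
  forall alpha C0 : R, 1 < alpha < 2 -> 0 < C0 ->
  exists C : R, 0 < C /\
  forall (N N1 N2 N3 : Z) (m Gamma : R) (jstar : nat),
    dyadic N -> dyadic N1 -> dyadic N2 -> dyadic N3 ->
    (1 <= N1 <= N)%Z -> (1 <= N2 <= N)%Z -> (1 <= N3 <= N)%Z ->
    (jstar = 1%nat \/ jstar = 2%nat \/ jstar = 3%nat) ->
    sel3 jstar N1 N2 N3 = Nmax3 N1 N2 N3 ->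
    0 < Gamma ->
    let B := inB alpha C0 m N N1 N2 N3 jstar Gamma in
    let Nmed := IZR (Nmed3 N1 N2 N3) in
    let Nmin := IZR (Nmin3 N1 N2 N3) in
    card_le (fun q : Z * Z * Z * Z => let '(k, k1, k2, k3) := q in B k k1 k2 k3)
      (C * Nmin * Nmed) /\
    (forall k : Z, card_le (fun q : Z * Z * Z => let '(k1, k2, k3) := q in B k k1 k2 k3)
      (C * Nmed)) /\
    (forall k1 : Z, card_le (fun q : Z * Z * Z => let '(k, k2, k3) := q in B k k1 k2 k3)
      (C * Nmed)) /\
    (forall k2 : Z, card_le (fun q : Z * Z * Z => let '(k, k1, k3) := q in B k k1 k2 k3)
      (C * Nmed)) /\
    (forall k3 : Z, card_le (fun q : Z * Z * Z => let '(k, k1, k2) := q in B k k1 k2 k3)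
      (C * Nmed)) /\
    (forall k k2 : Z, card_le (fun q : Z * Z => let '(k1, k3) := q in B k k1 k2 k3)
      (C * Nmed)) /\
    (forall k1 k3 : Z, card_le (fun q : Z * Z => let '(k, k2) := q in B k k1 k2 k3)
      (C * Nmed)).
Proof.
  intros al C0 Hal HC0.
  assert (HC0' : 0 <= C0) by lra.
  pose proof (slice_const_ge al C0 Hal HC0') as Hc.
  exists (3 * slice_const al C0). split; [lra|].
  intros N N1 N2 N3 m Gamma j _ _ _ _ HN1 HN2 HN3 Hj Hmax _ B Nmed Nmin.
  assert (HN : (1 <= N1 /\ 1 <= N2 /\ 1 <= N3)%Z) by lia.
  pose proof (inB_resonant al C0 m N N1 N2 N3 j Gamma) as Hres.
  pose proof (inB_frequencies al C0 m N N1 N2 N3 j Gamma) as Hfreq.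
  assert (HM : 0 <= Nmed) by (apply IZR_le; unfold Nmed3, Nmax3, Nmin3; lia).
  assert (Hslice : forall {T} (A : T -> Prop), card_le A (slice_const al C0 * Nmed) ->
                     card_le A (3 * slice_const al C0 * Nmed))
    by (intros T A; apply card_le_le; nra).
  split; [|repeat split; intros; apply Hslice].
  - eapply card_le_le; [|apply (card_le_B al C0 m N1 N2 N3 (Zfloor Gamma) j B); auto].
    right. fold Nmed Nmin. ring.
  - apply (card_le_B_slice_k al C0 m N1 N2 N3 (Zfloor Gamma) j B); auto.
  - apply (card_le_B_slice_k1 al C0 m N1 N2 N3 (Zfloor Gamma) j B); auto.
  - apply (card_le_B_slice_k2 al C0 m N1 N2 N3 (Zfloor Gamma) j B); auto.
  - apply (card_le_B_slice_k3 al C0 m N1 N2 N3 (Zfloor Gamma) j B); auto.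
  - apply (card_le_B_slice_k_k2 al C0 m N1 N2 N3 (Zfloor Gamma) j B); auto.
  - apply (card_le_B_slice_k1_k3 al C0 m N1 N2 N3 (Zfloor Gamma) j B); auto.
Qed.
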